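(* Let $n \ge k \ge 1$ be integers and let $G$ be the digraph whose vertex set is $C = \{x \in \mathbb{Z}^k : x_i \ge 1 \text{ for all } i,\ \sum_{i=1}^k x_i = n\}$, with a directed edge from $x$ to $y$ whenever $y = x + \delta_i$ for some $i \in \{1,\dots,k\}$. Then $G$ is self-converse, i.e. $G$ is isomorphic to the digraph obtained from $G$ by reversing the direction of every edge.
   Context: For $i \in \{1,\dots,k\}$, $\delta_i \in \mathbb{Z}^k$ is the vector with entry $1$ in position $i$, entry $-1$ in position $i+1$ (taken mod $k$, so $\delta_k$ has $1$ in position $k$ and $-1$ in position $1$), and $0$ elsewhere. (Vertices of $G$ are the unblocked configurations of $k$ workers on a circle of $n$ bins, $x_i$ being the distance from worker $i$ to worker $i+1$; an edge $x \to x+\delta_i$ corresponds to worker $i+1$ advancing one bin by a single Bernoulli failure.) Two digraphs are isomorphic if there is a bijection between vertex sets such that $(u,v)$ is an edge of the first iff the image pair is an edge of the second. *)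

From HB Require Import structures.
From mathcomp Require Import all_boot all_order all_algebra.
Set Implicit Arguments. Unset Strict Implicit. Unset Printing Implicit Defensive.
Import Order.TTheory GRing.Theory Num.Theory.
Local Open Scope ring_scope.

(* Points of Z^k, coordinates indexed by 'I_k (position i+1 in the paper is index i). *)
Definition pt (k : nat) := {ffun 'I_k -> int}.

(* delta_i : +1 at position i, -1 at position i+1 (mod k). For k = 1 this is 0. *)
Definition delta (k : nat) (i : 'I_k) : pt k :=
  [ffun j => (j == i)%:R - (j == ordS i)%:R].

Definition inC (n k : nat) (x : pt k) : bool :=
  [forall i, 1 <= x i] && (\sum_(i < k) x i == n%:Z).

Definition vertex (n k : nat) := {x : pt k | @inC n k x}.

Definition edgeG (n k : nat) (x y : vertex n k) : Prop :=
  exists i : 'I_k, val y = val x + delta i.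

(* G is self-converse: there is a bijection f of the vertex set with
   (u,v) an edge of G iff (f u, f v) is an edge of the converse of G,
   i.e. iff (f v, f u) is an edge of G. *)
Definition self_converse (V : Type) (E : V -> V -> Prop) : Prop :=
  exists f : V -> V, bijective f /\ forall u v, E u v <-> E (f v) (f u).

From mathcomp Require Import all_boot all_order all_algebra.
Set Implicit Arguments. Unset Strict Implicit. Unset Printing Implicit Defensive.
Import GRing.Theory.

(* The reflection j |-> -j of the coordinates, taken in Z/k, preserves C and
   sends delta_i to -delta_(-i-1): reversing the circle turns "worker i+1
   advances" into "worker -i retreats".  Being an involution, it is therefore
   an isomorphism from G onto its converse. *)

Lemma self_converse_involution (V : Type) (E : V -> V -> Prop) (f : V -> V) :
  involutive f -> (forall u v, E u v -> E (f v) (f u)) -> self_converse E.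
Proof.
move=> fK fE; exists f; split; first exact: inv_bij.
by move=> u v; split=> [/fE | /fE]; rewrite ?fK.
Qed.

Section Mirror.
Variables k n : nat.
Local Open Scope ring_scope.

Definition mirror (x : pt k.+1) : pt k.+1 := [ffun j => x (- j)].

Lemma mirrorK : involutive mirror.
Proof. by move=> x; apply/ffunP=> j; rewrite !ffunE opprK. Qed.

Lemma mirrorD (x y : pt k.+1) : mirror (x + y) = mirror x + mirror y.
Proof. by apply/ffunP=> j; rewrite !ffunE. Qed.

(* [Zp1] rather than [1]: ['I_1] carries no ring structure. *)
Lemma ordS_addZp1 (a : 'I_k.+1) : ordS a = a + Zp1.
Proof. by apply/val_inj; rewrite /= modnDmr addn1. Qed.

Lemma mirror_delta (i : 'I_k.+1) : mirror (delta i) = - delta (- i - Zp1).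
Proof.
apply/ffunP=> j; rewrite !ffunE !ordS_addZp1 subrK opprB.
by rewrite !eqr_oppLR opprD.
Qed.

Lemma inC_mirror (x : pt k.+1) : inC n x -> inC n (mirror x).
Proof.
case/andP=> /forallP x_ge1 /eqP sum_x; apply/andP; split.
  by apply/forallP=> i; rewrite ffunE x_ge1.
rewrite -sum_x (reindex_inj oppr_inj); apply/eqP/eq_bigr=> i _.
by rewrite ffunE opprK.
Qed.

Definition mirror_vertex (u : vertex n k.+1) : vertex n k.+1 :=
  exist _ (mirror (val u)) (inC_mirror (valP u)).

Lemma mirror_vertexK : involutive mirror_vertex.
Proof. by move=> u; apply/val_inj; rewrite /= mirrorK. Qed.

Lemma edgeG_mirror_vertex (u v : vertex n k.+1) :
  edgeG u v -> edgeG (mirror_vertex v) (mirror_vertex u).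
Proof.
case=> i uv; exists (- i - Zp1).
by rewrite /= uv mirrorD mirror_delta subrK.
Qed.

End Mirror.

Theorem lemma2 (n k : nat) (hk : (1 <= k)%N) (hkn : (k <= n)%N) :
  self_converse (@edgeG n k).
Proof.
case: k hk hkn => // k _ _.
exact: self_converse_involution (@mirror_vertexK k n) (@edgeG_mirror_vertex k n).
Qed.
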